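(* Let $X\subset\mathbb{R}^d$ be a finite point cloud in general position. For every $1\le k<d$, $\mathrm{MSA}^k\subseteq \mathrm{USC}^k$.
   Context: General position: no $d+1$ points of $X$ on a common affine hyperplane, no $d+2$ on a common $(d-1)$-sphere; $\mathsf{DEL}=\mathsf{DEL}(X)$ is the Delaunay complex and $\mathsf{DEL}^k$ its set of $k$-simplices; $\delta(\sigma)$ is the Euclidean diameter. Total orders $\prec$ on $\mathsf{DEL}^k$ are defined recursively: for edges, $\sigma\prec\sigma'$ iff $\delta(\sigma)<\delta(\sigma')$, or $\delta(\sigma)=\delta(\sigma')$ and $\sigma$ precedes $\sigma'$ lexicographically (vertices indexed and sorted increasingly); for $(k+1)$-simplices, $\sigma\prec\sigma'$ iff $\max\partial\sigma\prec\max\partial\sigma'$, or $\max\partial\sigma=\max\partial\sigma'$ and $\sigma$ precedes $\sigma'$ lexicographically, where $\partial\sigma$ is the set of facets and $\max$ is taken w.r.t. $\prec$ on $k$-simplices. A set $S\subseteq\mathsf{DEL}^k$ is a $k$-spanning acycle if, with $L=\mathsf{DEL}^{(k-1)}\cup S$ ($(k-1)$-skeleton plus $S$), $\tilde\beta_k(L)=0$ and $\tilde\beta_{k-1}(L)=0$ (reduced Betti numbers). $\mathrm{MSA}^k$ is the minimum $k$-spanning acycle of $\mathsf{DEL}$ w.r.t. $\prec$: the unique $k$-spanning acycle minimizing $\sum_{\sigma\in S}w(\sigma)$ for any weight $w:\mathsf{DEL}^k\to\mathbb{R}$ strictly increasing along $\prec$ (equivalently, the output of Kruskal's greedy algorithm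 processing $k$-simplices in $\prec$ order). $\mathrm{USC}^k=\{\sigma\in\mathsf{DEL}^k : \sigma\prec\max\partial\tau \text{ for every } (k+1)\text{-simplex } \tau\in\mathsf{DEL} \text{ with } \sigma\subset\tau\}$ (the $k$-dimensional Urquhart simplices). *)

From HB Require Import structures.
From mathcomp Require Import all_boot all_order all_algebra.
From mathcomp Require Import boolp reals.
Set Implicit Arguments. Unset Strict Implicit. Unset Printing Implicit Defensive.
Import Order.TTheory GRing.Theory Num.Theory.
Local Open Scope ring_scope.

Section Geometry.
Variables (R : realType) (d n : nat).
Implicit Types (x y : 'rV[R]_d) (p : 'I_n -> 'rV[R]_d) (s t : {set 'I_n}).

Definition enorm x : R := Num.sqrt (\sum_(l < d) x 0 l ^+ 2).
Definition edist x y : R := enorm (x - y).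

Definition general_position p : Prop :=
  (forall S : {set 'I_n}, #|S| = d.+1 ->
     ~ exists (a : 'rV[R]_d) (b : R),
         a != 0 /\ forall i, i \in S -> \sum_(l < d) a 0 l * p i 0 l = b) /\
  (forall S : {set 'I_n}, #|S| = d.+2 ->
     ~ exists (c : 'rV[R]_d) (r : R),
         forall i, i \in S -> edist (p i) c = r).

(** Delaunay complex = nerve of the Voronoi domains:
    a nonempty vertex set s spans a Delaunay simplex iff some point c
    is (weakly) closest to every p i, i in s, among all points of X. *)
Definition is_delaunay p s : Prop :=
  s != set0 /\
  exists c : 'rV[R]_d, forall i j, i \in s -> edist c (p i) <= edist c (p j).

Definition inDEL p s : bool := `[< is_delaunay p s >].

Definition DELk p (k : nat) : {set {set 'I_n}} :=
  [set s | inDEL p s & #|s| == k.+1].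

Definition diam p s : R :=
  \big[Num.max/0]_(i in s) \big[Num.max/0]_(j in s) edist (p i) (p j).

Fixpoint lexlt_seq (a b : seq nat) : bool :=
  match a, b with
  | x :: a', y :: b' => (x < y)%N || ((x == y) && lexlt_seq a' b')
  | [::], _ :: _ => true
  | _, _ => false
  end.

Definition sorted_vertices s : seq nat := sort leq [seq val i | i <- enum s].

Definition lexlt s t : bool := lexlt_seq (sorted_vertices s) (sorted_vertices t).

Definition facets s : {set {set 'I_n}} := [set s :\ i | i in s].

Definition max_facet (lt : rel {set 'I_n}) s : {set 'I_n} :=
  odflt set0 [pick f in facets s |
              [forall g in facets s, (g == f) || lt g f]].

(** Total orders prec on k-simplices, defined recursively;
    precS m is the order on (m+1)-simplices. *)
Fixpoint precS p (m : nat) : rel {set 'I_n} :=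
  if m is m'.+1 then
    fun s t =>
      let ms := max_facet (precS p m') s in
      let mt := max_facet (precS p m') t in
      precS p m' ms mt || ((ms == mt) && lexlt s t)
  else
    fun s t => (diam p s < diam p t) || ((diam p s == diam p t) && lexlt s t).

(** prec p k : the order on k-simplices (meaningful for k >= 1). *)
Definition prec p (k : nat) : rel {set 'I_n} := precS p k.-1.

Definition USC p (k : nat) : {set {set 'I_n}} :=
  [set s in DELk p k |
     [forall t in DELk p k.+1, (s \subset t) ==> prec p k s (max_facet (prec p k) t)]].

End Geometry.

Section Homology.
Variables (F : fieldType) (n : nat).
Local Notation N := #|{: {set 'I_n}}|.
Local Notation simp a := (@enum_val _ {: {set 'I_n}} a).

(** A finite simplicial complex is given by a boolean predicate on vertex
    sets; for reduced homology it is assumed to contain the empty simplex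
    (the (-1)-simplex), which makes the augmentation part of the boundary. *)

(** Sign of the face t of s: (-1)^(position of the removed vertex in the
    increasingly sorted vertex list of s). *)
Definition face_sign (s t : {set 'I_n}) : F :=
  (-1) ^+ (\sum_(v in s :\: t) #|[set u in s | (u < v)%N]|)%N.

(** Boundary map from j-chains to (j-1)-chains of K, as a matrix acting on
    row vectors indexed by all vertex sets (entries vanish off K). *)
Definition bdry (K : pred {set 'I_n}) (j : nat) : 'M[F]_(N, N) :=
  \matrix_(a, b)
    (if [&& K (simp a), #|simp a| == j.+1, K (simp b), simp b \subset simp a
          & #|simp b| == j]
     then face_sign (simp a) (simp b) else 0).

Definition chains (K : pred {set 'I_n}) (j : nat) : 'M[F]_(N, N) :=
  \matrix_(a, b) ((a == b) && K (simp a) && (#|simp a| == j.+1))%:R.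

Definition rbetti (K : pred {set 'I_n}) (j : nat) : nat :=
  (\rank (chains K j :&: kermx (bdry K j))%MS - \rank (bdry K j.+1))%N.

End Homology.

Section SpanningAcycles.
Variables (F : fieldType) (R : realType) (d n : nat).

(** The complex DEL^(k-1) ∪ S (with the empty simplex, for reduced homology). *)
Definition skel_plus (p : 'I_n -> 'rV[R]_d) (k : nat) (S : {set {set 'I_n}})
  : pred {set 'I_n} :=
  fun s => (s == set0) || (inDEL p s && (#|s| <= k)%N) || (s \in S).

Definition spanning_acycle (p : 'I_n -> 'rV[R]_d) (k : nat)
  (S : {set {set 'I_n}}) : Prop :=
  S \subset DELk p k /\
  rbetti F (skel_plus p k S) k = 0%N /\
  rbetti F (skel_plus p k S) k.-1 = 0%N.

Definition prec_increasing (p : 'I_n -> 'rV[R]_d) (k : nat)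
  (w : {set 'I_n} -> R) : Prop :=
  forall s t, s \in DELk p k -> t \in DELk p k -> prec p k s t -> w s < w t.

(** S is the minimum k-spanning acycle w.r.t. prec: it is a k-spanning
    acycle minimizing the total weight for a prec-increasing weight. *)
Definition is_MSA (p : 'I_n -> 'rV[R]_d) (k : nat) (S : {set {set 'I_n}}) : Prop :=
  spanning_acycle p k S /\
  forall w, prec_increasing p k w ->
    forall S', spanning_acycle p k S' ->
      \sum_(s in S) w s <= \sum_(s in S') w s.

End SpanningAcycles.

(* Exchange argument.  Let sigma be in MSA^k and let tau be a Delaunay
   (k+1)-simplex whose prec-largest facet is sigma.  Since the boundary of a
   boundary vanishes, the boundary of sigma is a combination of the boundaries
   of the other facets of tau.  As MSA^k is acyclic, the boundary of sigma is
   not spanned by those of MSA^k minus sigma, so neither are all the other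
   facets of tau: some facet f has its boundary outside that span.  Replacing
   sigma by f gives another k-spanning acycle, which is lighter because
   f precedes sigma, contradicting minimality. *)
From HB Require Import structures.
From mathcomp Require Import all_boot all_order all_algebra.
From mathcomp Require Import boolp reals zify.
Set Implicit Arguments. Unset Strict Implicit. Unset Printing Implicit Defensive.
Import Order.TTheory GRing.Theory Num.Theory.
Local Open Scope ring_scope.

Definition strict_total {T : eqType} (lt : rel T) :=
  [/\ irreflexive lt, transitive lt & forall x y, x != y -> lt x y || lt y x].

Lemma lexlt_seq_irr : irreflexive lexlt_seq.
Proof. by elim=> //= x a ->; rewrite ltnn eqxx. Qed.

Lemma lexlt_seq_trans : transitive lexlt_seq.
Proof.
move=> b a c; elim: a b c => [|x a IH] [|y b] [|z c] //=.
case/orP=> [xy|/andP[/eqP-> ab]]; case/orP=> [yz|/andP[/eqP<- bc]].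
- by rewrite (ltn_trans xy yz).
- by rewrite xy.
- by rewrite yz.
- by rewrite eqxx (IH _ _ ab bc) orbT.
Qed.

Lemma lexlt_seq_total a b : a != b -> lexlt_seq a b || lexlt_seq b a.
Proof.
elim: a b => [|x a IH] [|y b] //=.
by case: (ltngtP x y) => //= <- ab; apply: IH; apply: contraNneq ab => ->.
Qed.

Section Orders.
Variable n : nat.

Lemma mem_sorted_vertices (s : {set 'I_n}) i :
  (val i \in sorted_vertices s) = (i \in s).
Proof. by rewrite /sorted_vertices mem_sort (mem_map val_inj) mem_enum. Qed.

Lemma sorted_vertices_inj : injective (@sorted_vertices n).
Proof. by move=> s t E; apply/setP=> i; rewrite -!mem_sorted_vertices E. Qed.

Lemma lexlt_total : strict_total (@lexlt n).
Proof.
split=> [s|t s u|s t st]; first exact: lexlt_seq_irr.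
  exact: lexlt_seq_trans.
by apply: lexlt_seq_total; apply: contraNneq st => /sorted_vertices_inj->.
Qed.

Lemma lexlt_refine_total (T : eqType) (lt : rel T) (g : {set 'I_n} -> T) :
  strict_total lt ->
  strict_total (fun s t => lt (g s) (g t) || ((g s == g t) && lexlt s t)).
Proof.
case=> irr tr tot; case: lexlt_total => lirr ltr ltot; split.
- by move=> s; rewrite irr eqxx lirr.
- move=> t s u /orP[h1|/andP[/eqP e1 h1]] /orP[h2|/andP[/eqP e2 h2]].
  + by rewrite (tr _ _ _ h1 h2).
  + by rewrite -e2 h1.
  + by rewrite e1 h2.
  + by rewrite e1 e2 eqxx (ltr _ _ _ h1 h2) orbT.
- move=> s t st /=; have [e|ne] := eqVneq (g s) (g t).
    by rewrite e irr /=; case/orP: (ltot _ _ st) => ->; rewrite ?orbT.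
  by case/orP: (tot _ _ ne) => ->; rewrite ?orbT.
Qed.

Lemma precS_total (R : realType) d (p : 'I_n -> 'rV[R]_d) m :
  strict_total (precS p m).
Proof.
elim: m => [|m IH] /=; last exact: lexlt_refine_total.
apply: (lexlt_refine_total (lt := fun x y : R => x < y)).
split=> [x|y x z|x y]; [exact: ltxx | exact: lt_trans | by rewrite neq_lt].
Qed.

End Orders.

Lemma card_lower_ltn (T : finType) (lt : rel T) x y :
  irreflexive lt -> transitive lt -> lt x y ->
  (#|[set z | lt z x]| < #|[set z | lt z y]|)%N.
Proof.
move=> irr tr xy.
apply: leq_trans (subset_leq_card (_ : x |: [set z | lt z x] \subset _)).
  by rewrite cardsU1 inE irr.
by apply/subsetP=> z; rewrite !inE => /orP[/eqP->|/tr->].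
Qed.

Lemma exists_max (T : finType) (lt : rel T) (A : {pred T}) x0 :
  strict_total lt -> x0 \in A ->
  exists2 x, x \in A & forall y, y \in A -> (y == x) || lt y x.
Proof.
case=> irr tr tot x0A.
have [x xA xmax] := @arg_maxnP _ x0 (mem A) (fun x => #|[set z | lt z x]|) x0A.
exists x => // y yA; have [//|yx] := eqVneq y x.
case/orP: (tot _ _ yx) => // xy.
by move: (xmax y yA) => /=; rewrite leqNgt card_lower_ltn.
Qed.

Lemma max_facetP n (lt : rel {set 'I_n}) s :
  strict_total lt -> s != set0 ->
  max_facet lt s \in facets s /\
  forall f, f \in facets s -> (f == max_facet lt s) || lt f (max_facet lt s).
Proof.
move=> lt_total /set0Pn[i si].
have [f fs fmax] := exists_max lt_total (imset_f (fun i => s :\ i) si).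
rewrite /max_facet; case: pickP => [g /andP[gs /forall_inP gmax] | none].
  by split=> // h /gmax.
by move: (none f); rewrite fs /=; move/negP; case; apply/forall_inP.
Qed.

Section Facets.
Variable n : nat.
Implicit Types A B C : {set 'I_n}.

Lemma eq_setD1_of_card A B x :
  B \subset A -> #|B|.+1 = #|A| -> x \in A -> x \notin B -> B = A :\ x.
Proof.
move=> BA cB xA xB; apply/eqP; rewrite eqEcard; apply/andP; split.
  apply/subsetP=> y yB; rewrite !inE (subsetP BA _ yB) andbT.
  by apply: contraNneq xB => <-.
by rewrite -ltnS cB (cardsD1 x A) xA.
Qed.

Lemma mem_facets A B : B \subset A -> #|B|.+1 = #|A| -> B \in facets A.
Proof.
move=> BA cB; have [x /setDP[xA xB]] : exists x, x \in A :\: B.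
  by apply/set0Pn; rewrite -card_gt0 cardsD (setIidPr BA) -cB subSnn.
by apply/imsetP; exists x => //; apply: eq_setD1_of_card.
Qed.

Lemma facetsP A B : B \in facets A -> B \subset A /\ #|B|.+1 = #|A|.
Proof.
by case/imsetP=> x xA ->; rewrite subD1set (cardsD1 x A) xA.
Qed.

Lemma setDD1 A x : x \in A -> A :\: (A :\ x) = [set x].
Proof.
move=> xA; apply/setP=> y; rewrite !inE.
by case: (y =P x) => [->|_]; rewrite ?xA //= andNb.
Qed.

Lemma setD1_setD A C v w :
  A :\: C = [set v; w] -> v != w -> (A :\ v) :\: C = [set w].
Proof.
move=> E vw; apply/setP=> y; move/setP: E => /(_ y); rewrite !inE.
by case: (y =P v) => [->|//] /=; rewrite andbF (negbTE vw).
Qed.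

Lemma faces_between A B C v w :
  C \subset B -> B \subset A -> #|B|.+1 = #|A| -> A :\: C = [set v; w] ->
  B = A :\ v \/ B = A :\ w.
Proof.
move=> CB BA cB E.
have [x /setDP[xA xB]] : exists x, x \in A :\: B.
  by apply/set0Pn; rewrite -card_gt0 cardsD (setIidPr BA) -cB subSnn.
have : x \in A :\: C by rewrite inE xA andbT; apply: contra xB; apply/subsetP.
rewrite (eq_setD1_of_card BA cB xA xB) E !inE.
by case/orP=> /eqP->; [left | right].
Qed.

End Facets.

Section Boundary.
Variables (F : fieldType) (n : nat).
Local Notation N := #|{: {set 'I_n}}|.
Local Notation simp a := (@enum_val _ {: {set 'I_n}} a).
Implicit Types (K : pred {set 'I_n}) (A B C : {set 'I_n}).

Lemma face_sign_set1 A B x : A :\: B = [set x] ->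
  face_sign F A B = (-1) ^+ #|[set u in A | (u < x)%N]|.
Proof. by move=> E; rewrite /face_sign E big_set1. Qed.

(* Removing v < w in either order: the position of w drops by one when v
   goes first, while that of v does not change. *)
Lemma face_sign_cancel A C v w : A :\: C = [set v; w] -> (v < w)%N ->
  face_sign F A (A :\ v) * face_sign F (A :\ v) C +
  face_sign F A (A :\ w) * face_sign F (A :\ w) C = 0.
Proof.
move=> E vw.
have vw' : v != w by apply: contraTneq vw => ->; rewrite ltnn.
have /setDP[vA _] : v \in A :\: C by rewrite E !inE eqxx.
have /setDP[wA _] : w \in A :\: C by rewrite E !inE eqxx orbT.
have E' : A :\: C = [set w; v] by rewrite E setUC.
rewrite (face_sign_set1 (setDD1 vA)) (face_sign_set1 (setDD1 wA)).
rewrite (face_sign_set1 (setD1_setD E vw')).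
rewrite (face_sign_set1 (setD1_setD E' (_ : w != v))) 1?eq_sym //.
have -> : [set u in A :\ w | (u < v)%N] = [set u in A | (u < v)%N].
  apply/setP=> u; rewrite !inE; case: (u =P w) => [->|//].
  by rewrite ltnNge (ltnW vw) /= andbF.
have -> : [set u in A | (u < w)%N] = v |: [set u in A :\ v | (u < w)%N].
  by apply/setP=> u; rewrite !inE; case: (u =P v) => [->|//]; rewrite vA vw.
by rewrite cardsU1 !inE eqxx /= add1n exprS mulN1r mulNr mulrC addrN.
Qed.

Lemma bdry_bdry K j :
  (forall s i, K s -> #|s| = j.+2 -> i \in s -> K (s :\ i)) ->
  bdry F K j.+1 *m bdry F K j = 0.
Proof.
move=> Kfacet; apply/matrixP=> a c; rewrite !mxE.
rewrite (reindex (@enum_rank _) (onW_bij _ (enum_rank_bij _))) /=.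
under eq_bigr => B _ do rewrite !mxE enum_rankK.
set A := simp a; set C := simp c.
have [hA|hA] := boolP [&& K A, #|A| == j.+2, K C, C \subset A & #|C| == j];
  last first.
  apply: big1 => B _.
  case: ifP => [/and5P[KA sA KB BA sB]|_]; last by rewrite mul0r.
  case: ifP => [/and5P[_ _ KC CB sC]|_]; last by rewrite mulr0.
  by case/negP: hA; rewrite KA sA KC sC (subset_trans CB BA).
case/and5P: hA => KA /eqP sA KC CA /eqP sC.
have /cards2P[v [w [vw E]]] : #|A :\: C| == 2.
  by rewrite cardsD (setIidPr CA) sA sC -addn2 addKn.
wlog vw' : v w vw E / (v < w)%N.
  move=> wlog_vw; case: (ltngtP v w) => [|h|h]; first exact: wlog_vw.
    by apply: (wlog_vw w v); rewrite 1?eq_sym // setUC.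
  by move: vw; rewrite (val_inj h) eqxx.
have /setDP[vA vC] : v \in A :\: C by rewrite E !inE eqxx.
have /setDP[wA wC] : w \in A :\: C by rewrite E !inE eqxx orbT.
have Bwv : A :\ w != A :\ v.
  by apply/negP=> /eqP/setP/(_ w); rewrite !inE eqxx eq_sym (negbTE vw) wA.
rewrite (bigD1 (A :\ v)) // (bigD1 (A :\ w)) //= big1 ?addr0; last first.
  move=> B /andP[Bv Bw].
  case: ifP => [/and5P[_ _ _ BA /eqP sB]|_]; last by rewrite mul0r.
  case: ifP => [/and5P[_ _ _ CB _]|_]; last by rewrite mulr0.
  have cB : #|B|.+1 = #|A| by rewrite sA sB.
  by case: (faces_between CB BA cB E) => eB; rewrite eB eqxx in Bv Bw.
have cD x : x \in A -> #|A :\ x| = j.+1.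
  by move=> xA; apply/eqP; rewrite -eqSS -sA (cardsD1 x A) xA.
have up x : x \in A -> x \notin C ->
    [&& K A, #|A| == j.+2, K (A :\ x), A :\ x \subset A & #|A :\ x| == j.+1].
  by move=> xA xC; rewrite KA sA eqxx (Kfacet _ _ KA sA xA) subD1set cD ?eqxx.
have down x : x \in A -> x \notin C ->
    [&& K (A :\ x), #|A :\ x| == j.+1, K C, C \subset A :\ x & #|C| == j].
  by move=> xA xC; rewrite (Kfacet _ _ KA sA xA) cD ?eqxx // KC subsetD1 CA xC sC !eqxx.
rewrite (up v vA vC) (down v vA vC) (up w wA wC) (down w wA wC).
exact: face_sign_cancel.
Qed.

Definition indicator_mx (P : pred 'I_N) : 'M[F]_N := diag_mx (\row_a (P a)%:R).

Lemma rank_indicator_mx P : \rank (indicator_mx P) = #|P|.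
Proof.
have D := @mxdirect_delta F _ P N id (fun x y _ _ => id).
have -> : \rank (indicator_mx P) =
          \rank (\sum_(i | P i) <<delta_mx 0 i : 'rV[F]_N>>)%MS.
  apply: eqmx_rank; apply/andP; split.
    apply/row_subP=> i; rewrite row_diag_mx mxE.
    case: (boolP (P i)) => Pi; last by rewrite scale0r sub0mx.
    by rewrite scale1r (sumsmx_sup i) // genmxE.
  apply/sumsmx_subP=> i Pi; rewrite genmxE.
  by have := row_sub i (indicator_mx P); rewrite row_diag_mx mxE Pi scale1r.
move/mxdirectP: D => /= ->.
by rewrite (eq_bigr (fun _ => 1%N)) ?sum1_card // => i _; rewrite mxrank_gen mxrank_delta.
Qed.

Lemma chains_indicator K j :
  chains F K j = indicator_mx (fun a => K (simp a) && (#|simp a| == j.+1)).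
Proof. by apply/matrixP=> a b; rewrite !mxE; case: (a == b); rewrite ?mulr1n ?mulr0n. Qed.

Lemma card_simp (T : {set {set 'I_n}}) : #|[pred a : 'I_N | simp a \in T]| = #|T|.
Proof.
rewrite -(card_imset _ (@enum_rank_inj _)); apply: eq_card => a.
rewrite inE; apply/idP/imsetP => [aT|[x xT ->]]; last by rewrite enum_rankK.
by exists (simp a); rewrite ?enum_valK.
Qed.

Lemma eq_bdry K1 K2 j :
  (forall s : {set 'I_n}, (#|s| <= j.+1)%N -> K1 s = K2 s) -> bdry F K1 j = bdry F K2 j.
Proof.
move=> eqK; apply/matrixP=> a b; rewrite !mxE.
have [sa|sa] := eqVneq #|simp a| j.+1; last by rewrite !andbF.
have [sb|sb] := eqVneq #|simp b| j; last by rewrite !andbF.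
by rewrite !eqK ?sa ?sb.
Qed.

Lemma eq_chains K1 K2 j :
  (forall s : {set 'I_n}, (#|s| <= j.+1)%N -> K1 s = K2 s) -> chains F K1 j = chains F K2 j.
Proof.
move=> eqK; apply/matrixP=> a b; rewrite !mxE.
have [sa|sa] := eqVneq #|simp a| j.+1; last by rewrite !andbF.
by rewrite eqK ?sa.
Qed.

Lemma bdry_sub_chains K j : (bdry F K j.+1 <= chains F K j)%MS.
Proof.
suff -> : bdry F K j.+1 = bdry F K j.+1 *m chains F K j by apply: submxMl.
rewrite chains_indicator mul_mx_diag; apply/matrixP=> a b; rewrite !mxE.
by case: ifP => [/and5P[_ _ -> _ ->]|_]; rewrite ?mulr1 ?mul0r.
Qed.

Lemma chains_mul_bdry K j : chains F K j *m bdry F K j = bdry F K j.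
Proof.
rewrite chains_indicator mul_diag_mx; apply/matrixP=> a b; rewrite !mxE.
by case: ifP => [/and5P[-> -> _ _ _]|_]; rewrite ?mul1r ?mulr0.
Qed.

End Boundary.

Section DelaunayBoundary.
Variables (F : fieldType) (R : realType) (d n : nat) (p : 'I_n -> 'rV[R]_d).
Variable m : nat.
Local Notation N := #|{: {set 'I_n}}|.
Local Notation simp a := (@enum_val _ {: {set 'I_n}} a).
Local Notation DK := (DELk p m.+1).
Local Notation KT T := (skel_plus p m.+1 T).
Local Notation Mx T := (bdry F (skel_plus p m.+1 T) m.+1).
Local Notation Dm := (Mx DK).
Local Notation brow s := (row (enum_rank s) Dm).
Implicit Types (s t : {set 'I_n}) (T : {set {set 'I_n}}).

Definition low_skeleton : pred {set 'I_n} :=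
  fun s => (s == set0) || (inDEL p s && (#|s| <= m.+1)%N).

Definition low_cycles :=
  (chains F low_skeleton m :&: kermx (bdry F low_skeleton m))%MS.

Lemma inDEL_subset s t : inDEL p t -> s \subset t -> s != set0 -> inDEL p s.
Proof.
move=> /asboolP[_ [c Hc]] st s0; apply/asboolP; split => //.
by exists c => i j iS; apply: Hc; exact: (subsetP st).
Qed.

Lemma card_DELk k s : s \in DELk p k -> #|s| = k.+1.
Proof. by rewrite inE => /andP[_ /eqP]. Qed.

Lemma facets_DELk t f : t \in DELk p m.+2 -> f \in facets t -> f \in DK.
Proof.
move=> tD /facetsP[ft cf]; rewrite inE -eqSS cf (card_DELk tD) eqxx andbT.
have tDEL : inDEL p t by move: tD; rewrite inE => /andP[].
by apply: (inDEL_subset tDEL ft); rewrite -card_gt0 -ltnS cf (card_DELk tD).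
Qed.

Lemma skel_plus_low T : T \subset DK ->
  forall s, (#|s| <= m.+1)%N -> KT T s = low_skeleton s.
Proof.
move=> TD s sm; rewrite /skel_plus /low_skeleton; case: (boolP (s \in T)) => [sT|]; last by rewrite orbF.
by move: sm; rewrite (card_DELk (subsetP TD _ sT)) ltnn.
Qed.

Lemma skel_plus_top T s : #|s| = m.+2 -> KT T s = (s \in T).
Proof.
move=> sm; rewrite /skel_plus sm ltnn andbF orbF.
by case: (s =P set0) => // s0; move: sm; rewrite s0 cards0.
Qed.

Lemma row_bdry_skel_plus T a : T \subset DK ->
  row a (Mx T) = if simp a \in T then row a Dm else 0.
Proof.
move=> TD; case: ifP => aT; apply/rowP=> b; rewrite !mxE; last first.
  by case: ifP => // /and5P[+ /eqP sa _ _ _]; rewrite skel_plus_top // aT.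
have sa := card_DELk (subsetP TD _ aT).
rewrite !(skel_plus_top _ sa) aT (subsetP TD _ aT).
have [sb|sb] := eqVneq #|simp b| m.+1; last by rewrite !andbF.
by rewrite !skel_plus_low ?sb.
Qed.

Lemma bdry_row_sub T s : T \subset DK -> s \in T -> (brow s <= Mx T)%MS.
Proof.
move=> TD sT; have <- : row (enum_rank s) (Mx T) = brow s.
  by rewrite row_bdry_skel_plus // enum_rankK sT.
exact: row_sub.
Qed.

Lemma bdry_skel_plusS T1 T2 : T1 \subset T2 -> T2 \subset DK -> (Mx T1 <= Mx T2)%MS.
Proof.
move=> T12 T2D; apply/row_subP=> a.
rewrite row_bdry_skel_plus ?(subset_trans T12) //; case: ifP => aT; last by rewrite sub0mx.
by rewrite -[X in row X _](enum_valK a); apply: bdry_row_sub => //; apply: (subsetP T12).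
Qed.

Lemma bdry_skel_plus_sub_setD1 T s : T \subset DK ->
  (Mx T <= Mx (T :\ s) + brow s)%MS.
Proof.
move=> TD; have TsD : T :\ s \subset DK := subset_trans (subD1set T s) TD.
apply/row_subP=> a; rewrite row_bdry_skel_plus //; case: ifP => aT; last by rewrite sub0mx.
have [<-|sa] := eqVneq (simp a) s; first by rewrite enum_valK addsmxSr.
apply: submx_trans (addsmxSl _ _); rewrite -[X in row X _](enum_valK a).
by apply: bdry_row_sub; rewrite // !inE sa.
Qed.

Lemma rank_bdry_skel_plus T : T \subset DK ->
  (\rank (Mx T) + \rank (chains F (KT T) m.+1 :&: kermx (Mx T)) = #|T|)%N.
Proof.
move=> TD; rewrite -{1}chains_mul_bdry mxrank_mul_ker chains_indicator.
rewrite rank_indicator_mx -card_simp; apply: eq_card => a; rewrite !inE unfold_in /=.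
have [sa|sa] := eqVneq #|simp a| m.+2; first by rewrite skel_plus_top // andbT.
by rewrite andbF; apply/esym/negbTE; apply: contra sa => /(subsetP TD)/card_DELk->.
Qed.

Lemma rank_bdry_skel_plus_le T : T \subset DK -> (\rank (Mx T) <= #|T|)%N.
Proof. by move/rank_bdry_skel_plus <-; apply: leq_addr. Qed.

Lemma rbetti_skel_plus_top T : T \subset DK ->
  rbetti F (KT T) m.+1 = \rank (chains F (KT T) m.+1 :&: kermx (Mx T)).
Proof.
move=> TD; rewrite /rbetti.
suff -> : bdry F (KT T) m.+2 = 0 by rewrite mxrank0 subn0.
apply/matrixP => a b; rewrite !mxE.
have [sa|sa] := eqVneq #|simp a| m.+3; last by rewrite andbF.
rewrite /skel_plus sa ltnNge leqnSn /= andbF orbF.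
case: (boolP (simp a \in T)) => [/(subsetP TD)/card_DELk|_]; first by rewrite sa; lia.
by case: (simp a =P set0) => // a0; move: sa; rewrite a0 cards0.
Qed.

Lemma rbetti_skel_plus_low T : T \subset DK ->
  rbetti F (KT T) m = (\rank low_cycles - \rank (Mx T))%N.
Proof.
move=> TD; rewrite /rbetti /low_cycles.
by rewrite (eq_chains _ (skel_plus_low TD)) (eq_bdry _ (skel_plus_low TD)).
Qed.

Lemma bdry_skel_plus_sub_cycles T : T \subset DK -> (Mx T <= low_cycles)%MS.
Proof.
move=> TD; rewrite sub_capmx -(eq_chains _ (skel_plus_low TD)) bdry_sub_chains /=.
apply/sub_kermxP; rewrite -(eq_bdry _ (skel_plus_low TD)).
apply: bdry_bdry => s i Ks ss iS.
have sDEL : inDEL p s.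
  by move: Ks; rewrite skel_plus_top // => /(subsetP TD); rewrite inE => /andP[].
have cs : #|s :\ i| = m.+1 by apply/eqP; rewrite -eqSS -ss (cardsD1 i s) iS.
rewrite skel_plus_low ?cs // /low_skeleton cs leqnn andbT.
by rewrite (inDEL_subset sDEL (subD1set s i)) ?orbT // -card_gt0 cs.
Qed.

Lemma spanning_acycleP T : T \subset DK ->
  spanning_acycle F p m.+1 T <-> \rank (Mx T) = #|T| /\ (low_cycles <= Mx T)%MS.
Proof.
move=> TD; rewrite /spanning_acycle rbetti_skel_plus_top // rbetti_skel_plus_low //.
have rk := rank_bdry_skel_plus TD.
rewrite -(geq_leqif (mxrank_leqif_sup (bdry_skel_plus_sub_cycles TD))).
by split=> [[_ [? ?]]|[? ?]]; do ![split=> //]; lia.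
Qed.

(* Row tau of bdry * bdry = 0, in the complex DEL^(k) together with tau,
   expresses the row of sigma through the other facets of tau with an
   invertible (sign) coefficient. *)
Lemma bdry_row_facet_dependent t s (A : 'M[F]_N) :
  t \in DELk p m.+2 -> s \in facets t ->
  (forall f, f \in facets t -> f != s -> (brow f <= A)%MS) ->
  (brow s <= A)%MS.
Proof.
move=> tD sF facet_sub.
have sD := facets_DELk tD sF.
have [st _] := facetsP sF.
have ct := card_DELk tD.
pose Kt : pred {set 'I_n} := fun u => KT DK u || (u == t).
have KtE (u : {set 'I_n}) : (#|u| <= m.+2)%N -> Kt u = KT DK u.
  rewrite /Kt; case: (u =P t) => [->|]; last by rewrite orbF.
  by rewrite ct ltnn.
have BB : bdry F Kt m.+2 *m bdry F Kt m.+1 = 0.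
  apply: bdry_bdry => u i Ku su iu.
  have ut : u = t.
    move: Ku; rewrite /Kt /skel_plus su ltnNge leqnSn andbF orbF /=.
    case: (u =P set0) => [u0|_]; first by move: su; rewrite u0 cards0.
    case: (boolP (u \in DK)) => [/card_DELk|_]; first by rewrite su => /eqP; lia.
    by move/eqP.
  subst u; have cti : #|t :\ i| = m.+2 by apply/eqP; rewrite -eqSS -ct (cardsD1 i t) iu.
  by rewrite /Kt (skel_plus_top _ cti) (facets_DELk tD (imset_f _ iu)).
rewrite (eq_bdry _ KtE) in BB.
have := congr1 (row (enum_rank t)) BB; rewrite row_mul row0 mulmx_sum_row.
set u := row _ _.
rewrite (bigD1 (enum_rank s)) //= => /eqP; rewrite addr_eq0 => /eqP E.
have us : u 0 (enum_rank s) = face_sign F t s.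
  rewrite !mxE !enum_rankK /Kt eqxx orbT ct eqxx.
  by rewrite (skel_plus_top _ (card_DELk sD)) sD st (card_DELk sD) eqxx.
have u0 : u 0 (enum_rank s) != 0.
  by rewrite us /face_sign expf_eq0 oppr_eq0 oner_eq0 andbF.
have : (u 0 (enum_rank s) *: brow s <= A)%MS.
  rewrite E -scaleN1r scalemx_sub // summx_sub // => b bs.
  rewrite !mxE enum_rankK.
  case: ifP => [/and5P[_ _ _ bt /eqP sb]|_]; last by rewrite scale0r sub0mx.
  apply: scalemx_sub; rewrite -[X in row X _](enum_valK b); apply: facet_sub.
    by apply: mem_facets bt _; rewrite sb ct.
  by apply: contraNneq bs => <-; rewrite enum_valK.
by move/(scalemx_sub (u 0 (enum_rank s))^-1); rewrite scalerA mulVf // scale1r.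
Qed.

Lemma bdry_row_notin_setD1 S s : spanning_acycle F p m.+1 S -> s \in S ->
  ~~ (brow s <= Mx (S :\ s))%MS.
Proof.
move=> Sac sS; have SD := Sac.1; have [rkS _] := (spanning_acycleP SD).1 Sac.
apply/negP => sub.
have : (\rank (Mx S) <= \rank (Mx (S :\ s)))%N.
  apply/mxrankS/(submx_trans (bdry_skel_plus_sub_setD1 s SD)).
  by rewrite addsmx_sub submx_refl sub.
have := rank_bdry_skel_plus_le (subset_trans (subD1set S s) SD).
rewrite rkS (cardsD1 s S) sS add1n => le1 le2.
by have := leq_trans le2 le1; rewrite ltnn.
Qed.

Lemma exists_exchange_facet S s t :
  spanning_acycle F p m.+1 S -> s \in S -> t \in DELk p m.+2 -> s \in facets t ->
  exists2 f, f \in facets t & (f != s) && ~~ (brow f <= Mx (S :\ s))%MS.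
Proof.
move=> Sac sS tD sF; apply/exists_inP.
apply: (contraNT _ (bdry_row_notin_setD1 Sac sS)) => /exists_inPn all_sub.
apply: (bdry_row_facet_dependent tD sF) => f fF fs.
by move: (all_sub f fF); rewrite fs negbK.
Qed.

(* The boundary rows of S :\ sigma together with that of f span the same
   space as those of S :\ sigma and sigma, which contains the rows of S. *)
Lemma spanning_acycle_exchange S s f :
  spanning_acycle F p m.+1 S -> s \in S -> f \in DK ->
  ~~ (brow f <= Mx (S :\ s))%MS -> spanning_acycle F p m.+1 (f |: S :\ s).
Proof.
move=> Sac sS fD nf; have SD := Sac.1; have [rkS ZS] := (spanning_acycleP SD).1 Sac.
set A := Mx (S :\ s).
have SsD : S :\ s \subset DK := subset_trans (subD1set S s) SD.
have S'D : f |: S :\ s \subset DK by rewrite subUset sub1set fD.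
have fS : f \notin S :\ s := contra (bdry_row_sub SsD) nf.
have cS' : #|f |: S :\ s| = #|S| by rewrite cardsU1 fS (cardsD1 s S) sS.
have rkAf : (\rank A < \rank (A + brow f))%N.
  by rewrite (ltn_leqif (mxrank_leqif_sup (addsmxSl A _))) addsmx_sub submx_refl.
have fS_sub : (brow f <= Mx S)%MS.
  apply: submx_trans (bdry_row_sub (subxx DK) fD) _.
  exact: submx_trans (bdry_skel_plus_sub_cycles (subxx DK)) ZS.
have Afs : (A + brow f <= A + brow s)%MS.
  by rewrite addsmx_sub addsmxSl (submx_trans fS_sub (bdry_skel_plus_sub_setD1 s SD)).
have Asf : (A + brow s <= A + brow f)%MS.
  rewrite -(geq_leqif (mxrank_leqif_sup Afs)).
  apply: leq_trans (mxrank_adds_leqif A (brow s)).1 _.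
  by apply: leq_trans rkAf; rewrite -[X in (_ <= X)%N]addn1 leq_add2l rank_leq_row.
have SS' : (Mx S <= Mx (f |: S :\ s))%MS.
  apply: submx_trans (bdry_skel_plus_sub_setD1 s SD) (submx_trans Asf _).
  by rewrite addsmx_sub bdry_skel_plusS ?subsetUr // bdry_row_sub // setU11.
apply/(spanning_acycleP S'D); split; last exact: submx_trans ZS SS'.
apply/eqP; rewrite eqn_leq rank_bdry_skel_plus_le //= cS' -rkS.
exact: mxrankS.
Qed.

End DelaunayBoundary.

Section Minimality.
Variables (F : fieldType) (R : realType) (d n : nat) (p : 'I_n -> 'rV[R]_d).
Variable m : nat.

Lemma prec_increasing_card :
  prec_increasing p m.+1 (fun s => (#|[set t | precS p m t s]|)%:R : R).
Proof.
move=> s t _ _ st; rewrite ltr_nat.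
by case: (precS_total p m) => irr tr _; apply: card_lower_ltn.
Qed.

Lemma is_MSA_exchange S s f :
  is_MSA F p m.+1 S -> s \in S -> f \notin S :\ s ->
  spanning_acycle F p m.+1 (f |: S :\ s) -> ~~ precS p m f s.
Proof.
case=> _ Smin sS fS S'ac; apply/negP => fs.
have := Smin _ prec_increasing_card _ S'ac.
rewrite (big_setD1 s sS) (big_setU1 _ fS) /= lerD2r ler_nat leqNgt.
by case: (precS_total p m) => irr tr _; rewrite card_lower_ltn.
Qed.

End Minimality.

Theorem lemma2 (F : fieldType) (R : realType) (d n : nat)
  (p : 'I_n -> 'rV[R]_d) (k : nat) (S : {set {set 'I_n}}) :
  injective p ->
  general_position p ->
  (1 <= k)%N -> (k < d)%N ->
  is_MSA F p k S ->
  S \subset USC p k.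
Proof.
move=> _ _ k_gt0 _; case: k k_gt0 => // m _ MSA.
have Sac := MSA.1; have SD := Sac.1.
apply/subsetP => s sS; have sD := subsetP SD _ sS.
rewrite inE sD; apply/forall_inP => t tD; apply/implyP => st.
have t0 : t != set0 by rewrite -card_gt0 (card_DELk tD).
have [_ max_ge] := max_facetP (precS_total p m) t0.
have sF : s \in facets t.
  by apply: mem_facets => //; rewrite (card_DELk sD) (card_DELk tD).
case/orP: (max_ge _ sF) => [/eqP s_max|//].
have [f fF /andP[fs nf]] := exists_exchange_facet Sac sS tD sF.
have fS : f \notin S :\ s.
  by apply: contra nf; apply: bdry_row_sub; apply: subset_trans (subD1set S s) SD.
have := is_MSA_exchange MSA sS fS (spanning_acycle_exchange Sac sS (facets_DELk tD fF) nf).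
by case/orP: (max_ge _ fF); rewrite -s_max ?(negbTE fs) // => ->.
Qed.
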